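(* Let $P_1,\ldots,P_n$ be pairwise distinct linear orders on a finite set of alternatives $A$, and let $k_1,\ldots,k_n$ be positive integers. Let $Q=(P_1^{k_1},\ldots,P_n^{k_n})$ be the profile in which the linear order $P_i$ appears $k_i$ times (each copy held by a distinct voter). Then the profile $P=(P_1,\ldots,P_n)$ is single-crossing with respect to some tree on its voter set if and only if $Q$ is single-crossing with respect to some tree on its voter set.
   Context: A profile is a finite tuple of linear orders on $A$, one for each voter; voter $i$ prefers $a$ to $b$, written $a\succ_i b$. Given a tree $T=(V,E)$ whose vertex set $V$ is the set of voters, the profile is single-crossing with respect to $T$ if for every pair of distinct alternatives $a,b$ one of the following holds: (i) there is an edge $e\in E$ (an ''$ab$-cut'') such that, removing $e$ from $T$, the two resulting subtrees have vertex sets $V_1,V_2$ with all voters in $V_1$ preferring $a$ to $b$ and all voters in $V_2$ preferring $b$ to $a$; or (ii) all voters prefer $a$ to $b$, or all voters prefer $b$ to $a$. *)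

From mathcomp Require Import all_boot.
Set Implicit Arguments. Unset Strict Implicit. Unset Printing Implicit Defensive.

(* A (strict) linear order on the alternatives: [r a b] means "a is preferred to b". *)
Definition linear_order (A : finType) (r : rel A) : Prop :=
  irreflexive r /\ transitive r /\ (forall a b, a != b -> r a b || r b a).

Definition remove_edge (V : finType) (E : rel V) (u v : V) : rel V :=
  fun x y => E x y && ~~ (((x == u) && (y == v)) || ((x == v) && (y == u))).

(* A tree on vertex set V: a simple undirected graph (symmetric, irreflexive
   edge relation) that is connected and minimally connected (removing any
   edge disconnects its endpoints), i.e. connected and acyclic. *)
Definition is_tree (V : finType) (E : rel V) : Prop :=
  symmetric E /\ irreflexive E /\
  (forall x y, connect E x y) /\
  (forall u v, E u v -> ~~ connect (remove_edge E u v) u v).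

Definition single_crossing_tree (A V : finType) (prof : V -> rel A) (E : rel V) : Prop :=
  forall a b : A, a != b ->
    (exists u v, [/\ E u v,
        (forall w, connect (remove_edge E u v) u w -> prof w a b) &
        (forall w, connect (remove_edge E u v) v w -> prof w b a)])
    \/ (forall w, prof w a b) \/ (forall w, prof w b a).

Definition single_crossing_some_tree (A V : finType) (prof : V -> rel A) : Prop :=
  exists E : rel V, is_tree E /\ single_crossing_tree prof E.

From mathcomp Require Import all_boot.
Set Implicit Arguments. Unset Strict Implicit. Unset Printing Implicit Defensive.

(* Copies of one linear order span a subtree of any single-crossing tree: if a voter on
   the tree path between two copies held another order, the cut edge of a pair of
   alternatives on which the two orders disagree would lie on that path, putting the two
   copies on opposite sides.  Contracting these subtrees yields a single-crossing tree on
   the distinct orders.  Conversely, hanging the extra copies of each order as leaves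
   from a first copy turns a single-crossing tree on the distinct orders into one on all
   voters. *)

Lemma connect_ind (T : finType) (e : rel T) (P : T -> Prop) x :
  P x -> (forall y z, P y -> e y z -> P z) -> forall y, connect e x y -> P y.
Proof.
move=> Px step y /connectP [p pth ->]; elim: p x Px pth => [|z p IH] x Px //=.
by case/andP=> exz; apply: IH; apply: step exz.
Qed.

Lemma connect_last_edge (T : finType) (e : rel T) x y :
  connect e x y -> x != y -> exists z, e z y.
Proof.
move=> /connectP [p]; case/lastP: p => [|p z] /=; first by move=> _ ->; rewrite eqxx.
by rewrite rcons_path last_rcons => /andP [_ ez] ->; exists (last x p).
Qed.

Lemma remove_edgeC (T : finType) (E : rel T) u v : remove_edge E u v =2 remove_edge E v u.
Proof. by move=> x y; rewrite /remove_edge orbC. Qed.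

Lemma remove_edge_sym (T : finType) (E : rel T) u v :
  symmetric E -> symmetric (remove_edge E u v).
Proof.
move=> sE x y; rewrite /remove_edge sE; congr (_ && ~~ _).
by rewrite orbC; congr orb; apply: andbC.
Qed.

Lemma linear_order_asym (A : finType) (r : rel A) a b :
  linear_order r -> r a b -> r b a -> False.
Proof. by move=> [irr [tr _]] rab rba; have := tr _ _ _ rab rba; rewrite irr. Qed.

Section CutEdge.
Variables (T : finType) (E : rel T) (u v : T).
Hypotheses (sE : symmetric E) (bridge : ~~ connect (remove_edge E u v) u v).
Local Notation side_u := (connect (remove_edge E u v) u).

Lemma cut_edge_exit x z : E x z -> side_u x -> ~~ side_u z -> x = u /\ z = v.
Proof.
move=> e hx hz; case r: (remove_edge E u v x z).
  by rewrite (connect_trans hx (connect1 r)) in hz.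
move: r; rewrite /remove_edge e /= => /negbFE /orP [] /andP [/eqP xe /eqP ze] //.
by subst x; move/negP: bridge.
Qed.

Lemma path_outside_avoiding_u w q :
  path E w q -> ~~ side_u w -> u \notin q -> ~~ side_u (last w q).
Proof.
elim: q w => [|z q IH] w //= /andP [ewz pth] nhw.
rewrite inE negb_or => /andP [nuz nuq]; apply: IH => //.
apply/negP => hz; have [zu _] := cut_edge_exit (etrans (sE z w) ewz) hz nhw.
by rewrite zu eqxx in nuz.
Qed.

Lemma cut_edge_side_convex x p : path E x p -> uniq (x :: p) ->
  side_u x -> side_u (last x p) -> forall z, z \in p -> side_u z.
Proof.
elim: p x => [|y p IH] x //= /andP [exy pth] /andP [nx up] hx hl.
have hy : side_u y.
  case: (boolP (side_u y)) => // hy; have [xu _] := cut_edge_exit exy hx hy.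
  move: nx; rewrite inE negb_or xu => /andP [_ nup].
  by move: (path_outside_avoiding_u pth hy nup); rewrite hl.
move=> z; rewrite inE => /orP [/eqP -> //|zp].
exact: IH pth up hy hl z zp.
Qed.

Lemma cut_edge_sides (con : forall x y, connect E x y) w :
  side_u w || connect (remove_edge E u v) v w.
Proof.
pose sides w := side_u w || connect (remove_edge E u v) v w.
apply: (@connect_ind _ E sides u) (con u w); first by rewrite /sides connect0.
move=> p q hp epq; case r: (remove_edge E u v p q).
  by case/orP: hp => hp; rewrite /sides (connect_trans hp (connect1 r)) ?orbT.
move: r; rewrite /remove_edge epq /= => /negbFE /orP [] /andP [_ /eqP ->].
  by rewrite /sides connect0 orbT.
by rewrite /sides connect0.
Qed.

End CutEdge.

Definition fibre_rel (V' V : finType) (f : V' -> V) (E' : rel V') : rel V' :=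
  fun p q => E' p q && (f p == f q).

Section Quotient.
Variables (V' V : finType) (f : V' -> V) (s : V -> V').
Hypothesis fK : cancel s f.

Lemma connect_image (R' : rel V') (R : rel V) :
  (forall p q, R' p q -> f p = f q \/ R (f p) (f q)) ->
  forall x y, connect R' x y -> connect R (f x) (f y).
Proof.
move=> H x; apply: (@connect_ind _ R' (fun y => connect R (f x) (f y))).
  exact: connect0.
by move=> p q cp /H [<-|r] //; apply: connect_trans cp (connect1 r).
Qed.

Lemma connect_lift (R' : rel V') (R : rel V) :
  (forall p q, f p = f q -> connect R' p q) ->
  (forall i j, R i j -> exists p q, [/\ R' p q, f p = i & f q = j]) ->
  forall x y, connect R (f x) (f y) -> connect R' x y.
Proof.
move=> Hfib HR x y c.
suff /(_ y erefl) : forall w, f w = f y -> connect R' x w by [].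
apply: (@connect_ind _ R (fun i => forall w, f w = i -> connect R' x w)) c.
  by move=> w /esym /Hfib.
move=> i j IH /HR [p [q [rpq fp fq]]] w fw.
apply: connect_trans (IH p fp) (connect_trans (connect1 rpq) (Hfib _ _ _)).
by rewrite fq fw.
Qed.

Lemma fibre_rel_remove_edge (E' : rel V') x y :
  f x != f y -> subrel (fibre_rel f E') (remove_edge E' x y).
Proof.
move=> nxy a b /andP [e /eqP fab]; rewrite /remove_edge e /=.
by apply/negP => /orP [] /andP [/eqP ax /eqP bx]; subst; rewrite fab eqxx in nxy.
Qed.

Lemma path_fibre_rel (E' : rel V') x p :
  path E' x p -> (forall z, z \in p -> f z = f x) -> path (fibre_rel f E') x p.
Proof.
elim: p x => //= y p IH x /andP [e pth] H.
have fy : f y = f x by apply: H; rewrite mem_head.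
rewrite /fibre_rel e fy eqxx /=; apply: IH pth _ => z zp.
by rewrite fy; apply: H; rewrite inE zp orbT.
Qed.

Definition image_rel (E' : rel V') : rel V := fun i j =>
  (i != j) && [exists p, exists q, [&& E' p q, f p == i & f q == j]].

Lemma image_relP (E' : rel V') i j :
  image_rel E' i j -> exists p q, [/\ E' p q, f p = i & f q = j].
Proof.
by case/andP=> _ /existsP [p /existsP [q /and3P [e /eqP fp /eqP fq]]]; exists p, q.
Qed.

Lemma image_rel_edge (E' : rel V') p q :
  E' p q -> f p != f q -> image_rel E' (f p) (f q).
Proof.
move=> e npq; rewrite /image_rel npq; apply/existsP; exists p; apply/existsP; exists q.
by rewrite e !eqxx.
Qed.

Section ImageTree.
Variable E' : rel V'.
Hypothesis tE' : is_tree E'.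
Hypothesis fibre_connect : forall p q, f p = f q -> connect (fibre_rel f E') p q.

(* Removing an edge between two fibres splits the image exactly as it splits the tree,
   because each fibre is connected without using that edge. *)
Lemma image_rel_component x y : f x != f y -> forall z w,
  connect (remove_edge (image_rel E') (f x) (f y)) (f z) (f w) ->
  connect (remove_edge E' x y) z w.
Proof.
move=> nxy z w; apply: connect_lift.
  move=> p q /fibre_connect; apply: connect_sub => a b r.
  exact/connect1/(fibre_rel_remove_edge nxy).
move=> i j /andP [r nr]; have [p [q [e fp fq]]] := image_relP r.
exists p, q; split => //; rewrite /remove_edge e /=; apply: contra nr.
by rewrite -fp -fq; case/orP=> /andP [/eqP -> /eqP ->]; rewrite !eqxx ?orbT.
Qed.

Lemma image_rel_tree : is_tree (image_rel E').
Proof.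
have [sE' [_ [conE' brE']]] := tE'.
split; [|split; [|split]].
- suff imp i j : image_rel E' i j -> image_rel E' j i.
    by move=> i j; apply/idP/idP; apply: imp.
  move=> /[dup] /image_relP [p [q [e <- <-]]] /andP [npq _].
  by apply: image_rel_edge; rewrite 1?sE' 1?eq_sym.
- by move=> i; rewrite /image_rel eqxx.
- move=> i j; rewrite -(fK i) -(fK j); apply: connect_image (conE' _ _) => a b eab.
  by case: (eqVneq (f a) (f b)) => h; [left | right; apply: image_rel_edge].
- move=> i j /[dup] /image_relP [p [q [e <- <-]]] /andP [npq _].
  by apply/negP => /(image_rel_component npq); apply/negP/brE'.
Qed.

End ImageTree.
End Quotient.

Section Fibres.
Variables (A V V' : finType) (prof : V -> rel A) (f : V' -> V) (s : V -> V').
Hypotheses (fK : cancel s f) (lo : forall i, linear_order (prof i))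
  (prof_inj : forall i j, prof i =2 prof j -> i = j).
Local Notation prof' := (fun p => prof (f p)).

Lemma prof_disagree i j : i != j -> exists a b, prof i a b /\ prof j b a.
Proof.
move=> ij.
have /forallPn [a /forallPn [b nab]] : ~~ [forall a, forall b, prof i a b == prof j a b].
  apply: contra ij => /forallP H; apply/eqP/prof_inj => a b.
  exact/eqP/(forallP (H a)).
have [irri [_ toti]] := lo i; have [irrj [_ totj]] := lo j.
have ab : a != b by apply: contraNneq nab => ->; rewrite irri irrj.
case pab: (prof i a b) nab => /= nab.
  exists a, b; split => //; case/orP: (totj _ _ ab) => //.
  by move=> jab; rewrite jab in nab.
exists b, a; split; last by move: nab; case: (prof j a b).
by case/orP: (toti _ _ ab) => //; rewrite pab.
Qed.

Section Contract.
Variable E' : rel V'.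
Hypotheses (tE' : is_tree E') (scE' : single_crossing_tree prof' E').

Lemma tree_path_fibre x p : path E' x p -> uniq (x :: p) -> f (last x p) = f x ->
  forall z, z \in p -> f z = f x.
Proof.
move=> pth up flast z zp; case: (eqVneq (f x) (f z)) => [//|nzx]; exfalso.
have [a [b [xab zba]]] := prof_disagree nzx.
have [sE [_ [conE brE]]] := tE'.
have ab : a != b by apply: contraTneq xab => ->; have [-> _] := lo (f x).
case: (scE' ab) => [[u [v [euv Hu Hv]]]|[H|H]].
- have on_u_side w : f w = f x -> connect (remove_edge E' u v) u w.
    move=> fw; case/orP: (cut_edge_sides u v conE w) => // /Hv /=.
    by rewrite fw => /(linear_order_asym (lo _) xab).
  have /Hu := cut_edge_side_convex sE (brE _ _ euv) pth up (on_u_side x erefl)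
    (on_u_side _ flast) zp.
  exact: linear_order_asym (lo _) zba.
- exact: linear_order_asym (lo _) (H z) zba.
- exact: linear_order_asym (lo _) xab (H x).
Qed.

Lemma contract_fibre_connect x y : f x = f y -> connect (fibre_rel f E') x y.
Proof.
have [_ [_ [conE _]]] := tE'.
move=> fxy; have /connectP [p pth ly] := conE x y; subst y.
case: (shortenP pth) fxy => q pthq uq _ fxq.
apply/connectP; exists q => //.
exact: path_fibre_rel pthq (tree_path_fibre pthq uq (esym fxq)).
Qed.

Lemma contract_single_crossing : single_crossing_tree prof (image_rel f E').
Proof.
move=> a b ab; case: (scE' ab) => [[x [y [exy Hx Hy]]]|[H|H]]; last 2 first.
- by right; left => i; rewrite -(fK i); apply: H.
- by right; right => i; rewrite -(fK i); apply: H.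
have nxy : f x != f y.
  apply/eqP => fxy; have := Hx x (connect0 _ _); have := Hy y (connect0 _ _).
  by rewrite /= fxy => yba yab; apply: linear_order_asym (lo _) yab yba.
have lift_side z i : connect (remove_edge (image_rel f E') (f x) (f y)) (f z) i ->
    connect (remove_edge E' x y) z (s i).
  by rewrite -{1}(fK i); apply: (image_rel_component contract_fibre_connect nxy).
left; exists (f x), (f y); split; first exact: image_rel_edge.
  by move=> i /lift_side /Hx; rewrite fK.
by move=> i /lift_side /Hy; rewrite fK.
Qed.

End Contract.

Lemma single_crossing_contract :
  single_crossing_some_tree prof' -> single_crossing_some_tree prof.
Proof.
move=> [E' [tE' scE']]; exists (image_rel f E'); split.
  exact: (image_rel_tree fK tE' (contract_fibre_connect tE' scE')).
exact: contract_single_crossing.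
Qed.

(* Each fibre becomes a star centred at its representative [s i]; the centres are
   joined as in [E]. *)
Definition blowup_rel (E : rel V) : rel V' := fun p q =>
  if f p == f q then (p == s (f p)) (+) (q == s (f q))
  else [&& E (f p) (f q), p == s (f p) & q == s (f q)].

Section Blowup.
Variable E : rel V.
Hypothesis tE : is_tree E.

Lemma blowup_rel_sym : symmetric (blowup_rel E).
Proof.
have [sE _] := tE; move=> p q; rewrite /blowup_rel eq_sym.
by case: eqP => _; [apply: addbC | rewrite sE; congr andb; apply: andbC].
Qed.

Lemma blowup_rel_irr : irreflexive (blowup_rel E).
Proof. by move=> p; rewrite /blowup_rel eqxx addbb. Qed.

Lemma blowup_rel_cross p q : blowup_rel E p q -> f p != f q ->
  [/\ E (f p) (f q), p = s (f p) & q = s (f q)].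
Proof.
by rewrite /blowup_rel => + /negbTE npq; rewrite npq => /and3P [? /eqP ? /eqP ?].
Qed.

Lemma blowup_rel_root i j : E i j -> blowup_rel E (s i) (s j).
Proof.
have [_ [irrE _]] := tE; move=> e; rewrite /blowup_rel !fK e !eqxx.
by case: eqVneq e => // ->; rewrite irrE.
Qed.

Lemma blowup_rel_leaf z p : blowup_rel E z p -> p != s (f p) -> z = s (f p).
Proof.
move=> e np; case: (eqVneq (f z) (f p)) => fzp.
  by move: e; rewrite /blowup_rel fzp eqxx (negbTE np) addbF => /eqP.
by have [_ _ pr] := blowup_rel_cross e fzp; rewrite -pr eqxx in np.
Qed.

Lemma blowup_fibre_connect p q : f p = f q -> connect (fibre_rel f (blowup_rel E)) p q.
Proof.
have to_root r : connect (fibre_rel f (blowup_rel E)) r (s (f r)).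
  case: (eqVneq r (s (f r))) => [<-|nr]; first exact: connect0.
  by apply: connect1; rewrite /fibre_rel /blowup_rel !fK (negbTE nr) !eqxx.
have sym : connect_sym (fibre_rel f (blowup_rel E)).
  by apply: sym_connect_sym => a b; rewrite /fibre_rel blowup_rel_sym eq_sym.
by move=> fpq; apply: connect_trans (to_root p) _; rewrite fpq sym to_root.
Qed.

Lemma blowup_component x y : blowup_rel E x y -> f x != f y -> forall z w,
  connect (remove_edge (blowup_rel E) x y) z w ->
  connect (remove_edge E (f x) (f y)) (f z) (f w).
Proof.
move=> exy nxy; apply: connect_image => p q /andP [e ne].
case: (eqVneq (f p) (f q)) => fpq; [by left | right].
have [epq pr qr] := blowup_rel_cross e fpq; have [_ xr yr] := blowup_rel_cross exy nxy.
rewrite /remove_edge epq /=; apply: contra ne.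
case/orP=> /andP [/eqP pf /eqP qf].
  have -> : p = x by rewrite pr xr pf.
  have -> : q = y by rewrite qr yr qf.
  by rewrite !eqxx.
have -> : p = y by rewrite pr yr pf.
have -> : q = x by rewrite qr xr qf.
by rewrite !eqxx orbT.
Qed.

Lemma blowup_leaf_bridge x y : blowup_rel E x y -> y != s (f y) ->
  ~~ connect (remove_edge (blowup_rel E) x y) x y.
Proof.
move=> exy ny; apply/negP => /connect_last_edge.
have nxy : x != y by apply: contraTneq exy => ->; rewrite blowup_rel_irr.
case/(_ nxy) => z /andP [ezy].
by rewrite (blowup_rel_leaf ezy ny) -(blowup_rel_leaf exy ny) !eqxx.
Qed.

Lemma blowup_tree : is_tree (blowup_rel E).
Proof.
have [sE [irrE [conE brE]]] := tE.
split; [exact: blowup_rel_sym | split; [exact: blowup_rel_irr | split]].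
  move=> x y; apply: connect_lift (conE _ _).
    move=> p q /blowup_fibre_connect; apply: connect_sub => a b /andP [e _].
    exact: connect1.
  by move=> i j e; exists (s i), (s j); rewrite blowup_rel_root ?fK.
move=> x y exy; case: (eqVneq (f x) (f y)) => fxy; last first.
  apply/negP => /(blowup_component exy fxy); apply/negP/brE.
  by have [] := blowup_rel_cross exy fxy.
case: (eqVneq y (s (f y))) => [yr|ny]; last exact: blowup_leaf_bridge.
have nx : x != s (f x).
  by move: exy; rewrite /blowup_rel fxy eqxx -yr eqxx addbT.
rewrite (sym_connect_sym (remove_edge_sym _ _ blowup_rel_sym)).
rewrite (eq_connect (remove_edgeC _ x y)).
by apply: blowup_leaf_bridge nx; rewrite blowup_rel_sym.
Qed.

Lemma blowup_single_crossing :
  single_crossing_tree prof E -> single_crossing_tree prof' (blowup_rel E).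
Proof.
move=> scE a b ab; case: (scE a b ab) => [[u [v [euv Hu Hv]]]|[H|H]]; last 2 first.
- by right; left.
- by right; right.
have e := blowup_rel_root euv.
have nuv : f (s u) != f (s v).
  by rewrite !fK; apply: contraTneq euv => ->; have [_ [-> _]] := tE.
left; exists (s u), (s v); split => // w /(blowup_component e nuv); rewrite !fK.
  exact: Hu.
exact: Hv.
Qed.

End Blowup.

Lemma single_crossing_blowup :
  single_crossing_some_tree prof -> single_crossing_some_tree prof'.
Proof.
move=> [E [tE scE]]; exists (blowup_rel E).
by split; [apply: blowup_tree | apply: blowup_single_crossing].
Qed.

Theorem single_crossing_some_tree_comp :
  single_crossing_some_tree prof <-> single_crossing_some_tree prof'.
Proof. by split; [apply: single_crossing_blowup | apply: single_crossing_contract]. Qed.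

End Fibres.

Theorem lemma1 (A : finType) (n : nat) (P : 'I_n -> rel A) (k : 'I_n -> nat) :
  (forall i, linear_order (P i)) ->
  (forall i j, P i =2 P j -> i = j) ->
  (forall i, 0 < k i) ->
  single_crossing_some_tree P <->
  single_crossing_some_tree (fun v : {i : 'I_n & 'I_(k i)} => P (tag v)).
Proof.
move=> lo inj hk.
pose first_copy i := Tagged (fun i => 'I_(k i)) (Ordinal (hk i)).
have first_copyK : cancel first_copy tag by [].
exact: single_crossing_some_tree_comp first_copyK lo inj.
Qed.
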